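(* For every prior $(q_H,q_1,q_2,q_L)$ with strictly positive entries summing to $1$ and every receiver type $i\in[-1/2,1/2]$, all types accept the recommendation in the limit $R\to 1$ and in the limit $R\to 0$; that is, the limits $\lim_{R\to1}\big(\Delta_O^B(R)-i\,\Delta_S^B(R)\big)$ and $\lim_{R\to0}\big(\Delta_O^B(R)-i\,\Delta_S^B(R)\big)$ exist and are nonnegative.
   Context: Setting. Consumer types are $i\in[-1/2,1/2]$, distributed according to a continuous cumulative distribution function $F$ with full support on $[-1/2,1/2]$. A product has a quality vector $(Q_1,Q_2)\in\{0,1\}^2$; a type-$i$ consumer gets payoff $(1/2+i)Q_1+(1/2-i)Q_2$ from it. The versions $(1,1),(1,0),(0,1),(0,0)$ have prior probabilities $q_H,q_1,q_2,q_L$. Given a threshold $R\in(0,1)$, a sender with type drawn from $F$ gives a buy recommendation $B$ if her payoff from the product is at least $R$ and a don't-buy recommendation otherwise. Let $\phi_1(R)=1-F(R-1/2)$, $\phi_2(R)=F(1/2-R)$, $\pi^B(R)=q_H+q_1\phi_1(R)+q_2\phi_2(R)$, and posteriors after $B$: $p^B_H=q_H/\pi^B$, $p^B_1=q_1\phi_1(R)/\pi^B$, $p^B_2=q_2\phi_2(R)/\pi^B$. Define $\Delta_O^B(R)=p_H^B-q_H+\frac{p_1^B-q_1}{2}+\frac{p_2^B-q_2}{2}$ and $\Delta_S^B(R)=(p_2^B-q_2)-(p_1^B-q_1)$. A receiver of type $i$ accepts the recommendation at threshold $R$ if and only if $\Delta_O^B(R)\ge i\,\Delta_S^B(R)$ (equivalently,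 the expected payoff of the product after a buy recommendation is at least that of an unrecommended product, and after a don't-buy recommendation at most that). *)

From Stdlib Require Import Reals.
From Coquelicot Require Import Coquelicot.
Open Scope R_scope.

Definition cdf_full_support (F : R -> R) : Prop :=
  (forall x, continuous F x) /\
  (forall x y, x <= y -> F x <= F y) /\
  (forall x, x <= -1/2 -> F x = 0) /\
  (forall x, 1/2 <= x -> F x = 1) /\
  (forall x y, -1/2 <= x -> x < y -> y <= 1/2 -> F x < F y).

Definition phi1 (F : R -> R) (R0 : R) : R := 1 - F (R0 - 1/2).
Definition phi2 (F : R -> R) (R0 : R) : R := F (1/2 - R0).

Definition piB (F : R -> R) (qH q1 q2 : R) (R0 : R) : R :=
  qH + q1 * phi1 F R0 + q2 * phi2 F R0.

Definition pBH (F : R -> R) (qH q1 q2 : R) (R0 : R) : R :=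
  qH / piB F qH q1 q2 R0.
Definition pB1 (F : R -> R) (qH q1 q2 : R) (R0 : R) : R :=
  q1 * phi1 F R0 / piB F qH q1 q2 R0.
Definition pB2 (F : R -> R) (qH q1 q2 : R) (R0 : R) : R :=
  q2 * phi2 F R0 / piB F qH q1 q2 R0.

Definition DeltaO (F : R -> R) (qH q1 q2 : R) (R0 : R) : R :=
  pBH F qH q1 q2 R0 - qH
  + (pB1 F qH q1 q2 R0 - q1) / 2
  + (pB2 F qH q1 q2 R0 - q2) / 2.

Definition DeltaS (F : R -> R) (qH q1 q2 : R) (R0 : R) : R :=
  (pB2 F qH q1 q2 R0 - q2) - (pB1 F qH q1 q2 R0 - q1).

Definition accept_gap (F : R -> R) (qH q1 q2 i : R) (R0 : R) : R :=
  DeltaO F qH q1 q2 R0 - i * DeltaS F qH q1 q2 R0.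

From Stdlib Require Import Reals Lra.
From Coquelicot Require Import Coquelicot.
Open Scope R_scope.

(* At R = 1 only senders facing version (1,1) recommend (phi1 = phi2 = 0), so a
   buy recommendation reveals (1,1) and the gap is
   qL + q1 (1/2 - i) + q2 (1/2 + i).  At R = 0 every sender except those facing
   (0,0) recommends (phi1 = phi2 = 1), the posteriors are the prior scaled by
   1/(1 - qL), and the gap is qL/(1 - qL) (qH + q1 (1/2 + i) + q2 (1/2 - i)).
   Both are nonnegative for |i| <= 1/2, and the one-sided limits are these
   values because the gap is continuous wherever piB does not vanish. *)

Lemma continuity_pt_filterlim_within (f : R -> R) (x : R) (D : R -> Prop) :
  continuity_pt f x -> filterlim f (within D (locally x)) (locally (f x)).
Proof.
  intros Hf. apply (filterlim_filter_le_1 (F := locally x)).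
  - intros P. apply filter_le_within.
  - now apply continuity_pt_filterlim.
Qed.

(* [assumption] comes first so that a function already known to be continuous
   (phi1 F, piB ...) is not unfolded and decomposed again. *)
Ltac continuity_pt_rational :=
  repeat first
    [ assumption
    | apply continuity_pt_const; intros ? ?; reflexivity
    | apply continuity_pt_plus | apply continuity_pt_minus
    | apply continuity_pt_mult | apply continuity_pt_div | apply continuity_pt_inv
    | apply continuity_pt_opp | apply continuity_pt_id ].

Section Continuity.

Variable F : R -> R.
Hypothesis F_cont : forall x, continuous F x.

Lemma continuity_pt_phi1 (x : R) : continuity_pt (phi1 F) x.
Proof.
  apply continuity_pt_minus.
  - apply continuity_pt_const; intros ? ?; reflexivity.
  - apply (continuity_pt_comp (fun y => y - 1/2) F).
    + continuity_pt_rational.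
    + apply continuity_pt_filterlim, F_cont.
Qed.

Lemma continuity_pt_phi2 (x : R) : continuity_pt (phi2 F) x.
Proof.
  apply (continuity_pt_comp (fun y => 1/2 - y) F).
  - continuity_pt_rational.
  - apply continuity_pt_filterlim, F_cont.
Qed.

Variables qH q1 q2 i : R.

Lemma continuity_pt_accept_gap (x : R) :
  piB F qH q1 q2 x <> 0 -> continuity_pt (accept_gap F qH q1 q2 i) x.
Proof.
  intros Hpi.
  pose proof (continuity_pt_phi1 x). pose proof (continuity_pt_phi2 x).
  assert (continuity_pt (piB F qH q1 q2) x) by (unfold piB; continuity_pt_rational).
  unfold accept_gap, DeltaO, DeltaS, pBH, pB1, pB2.
  continuity_pt_rational.
Qed.

End Continuity.

Section Endpoints.

Variables (F : R -> R) (qH q1 q2 qL i : R).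
Hypothesis F_left : F (-1/2) = 0.
Hypothesis F_right : F (1/2) = 1.
Hypothesis prior_sum : qH + q1 + q2 + qL = 1.

Lemma piB_1 : piB F qH q1 q2 1 = qH.
Proof.
  unfold piB, phi1, phi2.
  replace (1 - 1/2) with (1/2) by lra; replace (1/2 - 1) with (-1/2) by lra.
  rewrite F_left, F_right; ring.
Qed.

Lemma piB_0 : piB F qH q1 q2 0 = 1 - qL.
Proof.
  unfold piB, phi1, phi2.
  replace (0 - 1/2) with (-1/2) by lra; replace (1/2 - 0) with (1/2) by lra.
  rewrite F_left, F_right; lra.
Qed.

Lemma accept_gap_1 :
  qH <> 0 -> accept_gap F qH q1 q2 i 1 = qL + q1 * (1/2 - i) + q2 * (1/2 + i).
Proof.
  intros HqH.
  unfold accept_gap, DeltaO, DeltaS, pBH, pB1, pB2.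
  rewrite piB_1; unfold phi1, phi2.
  replace qL with (1 - qH - q1 - q2) by lra.
  replace (1 - 1/2) with (1/2) by lra; replace (1/2 - 1) with (-1/2) by lra.
  rewrite F_left, F_right; field; exact HqH.
Qed.

Lemma accept_gap_0 :
  qL <> 1 ->
  accept_gap F qH q1 q2 i 0 = qL / (1 - qL) * (qH + q1 * (1/2 + i) + q2 * (1/2 - i)).
Proof.
  intros HqL.
  unfold accept_gap, DeltaO, DeltaS, pBH, pB1, pB2.
  rewrite piB_0; unfold phi1, phi2.
  replace (0 - 1/2) with (-1/2) by lra; replace (1/2 - 0) with (1/2) by lra.
  rewrite F_left, F_right.
  replace qH with (1 - qL - q1 - q2) by lra.
  field; lra.
Qed.

End Endpoints.

Theorem proposition2 (F : R -> R) (qH q1 q2 qL i : R) :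
  cdf_full_support F ->
  0 < qH -> 0 < q1 -> 0 < q2 -> 0 < qL -> qH + q1 + q2 + qL = 1 ->
  -1/2 <= i <= 1/2 ->
  (exists l : R,
     filterlim (accept_gap F qH q1 q2 i) (at_left 1) (locally l) /\ 0 <= l) /\
  (exists l : R,
     filterlim (accept_gap F qH q1 q2 i) (at_right 0) (locally l) /\ 0 <= l).
Proof.
  intros (F_cont & _ & F_low & F_high & _) HqH Hq1 Hq2 HqL Hsum Hi.
  assert (F_left : F (-1/2) = 0) by (apply F_low; lra).
  assert (F_right : F (1/2) = 1) by (apply F_high; lra).
  split.
  - exists (accept_gap F qH q1 q2 i 1); split.
    + apply continuity_pt_filterlim_within, continuity_pt_accept_gap; [exact F_cont |].
      rewrite piB_1 by assumption; lra.
    + rewrite accept_gap_1 with (qL := qL) by (assumption || lra). nra.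
  - exists (accept_gap F qH q1 q2 i 0); split.
    + apply continuity_pt_filterlim_within, continuity_pt_accept_gap; [exact F_cont |].
      rewrite piB_0 with (qL := qL) by assumption; lra.
    + rewrite accept_gap_0 with (qL := qL) by (assumption || lra).
      apply Rmult_le_pos; [apply Rlt_le, Rdiv_lt_0_compat |]; nra.
Qed.
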